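(* For every integer $n\ge2$, \[ \sum_{j=0}^{n}B_j=\mathbb{B}_n^{(2)}(1)+B_n-\mathbb{B}_n^{(2)}-1 . \]
   Context: $B_j$ is the $j$th Bernoulli number ($\frac{t}{e^t-1}=\sum_{m\ge0}B_m\frac{t^m}{m!}$). The poly-Bernoulli polynomials are defined by $\sum_{n\ge0}\mathbb{B}_n^{(p)}(x)\frac{t^n}{n!}=\frac{\mathrm{Li}_p(1-e^{-t})}{1-e^{-t}}e^{xt}$ with $\mathrm{Li}_p(z)=\sum_{m\ge1}z^m/m^p$; $\mathbb{B}_n^{(2)}(x)$ is the di-Bernoulli polynomial and $\mathbb{B}_n^{(2)}=\mathbb{B}_n^{(2)}(0)$ the di-Bernoulli number. *)

From mathcomp Require Import all_boot all_order all_algebra.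
Set Implicit Arguments. Unset Strict Implicit. Unset Printing Implicit Defensive.
Import Order.TTheory GRing.Theory Num.Theory.
Local Open Scope ring_scope.

(* A formal power series sum_n a n t^n with rational coefficients. *)
Definition ps := nat -> rat.

Definition mulps (f g : ps) : ps := fun n => \sum_(k < n.+1) f k * g (n - k)%N.

Definition oneps : ps := fun n => (n == 0)%:R.
Definition tps : ps := fun n => (n == 1)%:R.

Definition powps (f : ps) (k : nat) : ps := iter k (mulps f) oneps.

Definition expps (c : rat) : ps := fun n => c ^+ n / (n`!)%:R.

Definition egf (a : nat -> rat) : ps := fun n => a n / (n`!)%:R.

Definition expm1ps : ps := fun n => expps 1 n - oneps n.

Definition uexp : ps := fun n => oneps n - expps (-1) n.

(* Li_p(1 - e^{-t}) = sum_{m>=1} (1-e^{-t})^m / m^p, as a formal power series.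
   Since (1-e^{-t})^m has no terms of degree < m, the coefficient of t^n only
   receives contributions from 1 <= m <= n. *)
Definition Li_uexp (p : nat) : ps :=
  fun n => \sum_(1 <= m < n.+1) powps uexp m n / (m ^ p)%:R.

(* B is the Bernoulli sequence:  t = (e^t - 1) * sum_m B_m t^m/m!
   (coefficientwise form of  t/(e^t-1) = sum_m B_m t^m/m!). *)
Definition is_bernoulli (B : nat -> rat) : Prop :=
  mulps expm1ps (egf B) = tps.

(* PB x n is the poly-Bernoulli polynomial B_n^(p)(x):
   (1 - e^{-t}) * sum_n PB x n t^n/n! = Li_p(1-e^{-t}) e^{xt}
   (coefficientwise form of the defining generating function, cleared of the
   denominator 1 - e^{-t}). *)
Definition is_poly_bernoulli (p : nat) (PB : rat -> nat -> rat) : Prop :=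
  forall x : rat, mulps uexp (egf (PB x)) = mulps (Li_uexp p) (expps x).

(* Put u = 1 - e^{-t}. The defining identity of the di-Bernoulli polynomials gives
   sum_n (B_n^(2)(1) - B_n^(2)(0)) t^n/n! = Li_2(u) (e^t - 1)/u = Li_2(u) e^t,
   while d/dt Li_2(u) = -log(1 - u) u'/u = t e^{-t}/(1 - e^{-t}) = t/(e^t - 1),
   so the coefficient of t^(i+1) in Li_2(u) is B_i/(i+1)!. Comparing coefficients
   of t^n gives B_n^(2)(1) - B_n^(2) = sum_{i<n} C(n,i+1) B_i, and the recurrence
   sum_{i<N} C(N,i) B_i = [N = 1] turns the right-hand side into sum_{i<n} B_i + 1.

   The series identities are checked on polynomial truncations, compared below a
   fixed degree ([eq_upto]). Division by u is never performed: u is cancelled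
   instead, because t = e^t (t/(e^t - 1)) u exhibits u as t times a series. *)

From mathcomp Require Import all_boot all_order all_algebra.
From mathcomp Require Import ring zify.
Set Implicit Arguments. Unset Strict Implicit. Unset Printing Implicit Defensive.
Import GRing.Theory Num.Theory.
Local Open Scope ring_scope.

Section TruncatedEquality.
Variable R : nzRingType.
Implicit Types p q r : {poly R}.

Definition eq_upto (k : nat) p q := forall j, (j < k)%N -> p`_j = q`_j.

Lemma eq_upto_sym k p q : eq_upto k p q -> eq_upto k q p.
Proof. by move=> h j /h ->. Qed.

Lemma eq_upto_trans k p q r : eq_upto k p q -> eq_upto k q r -> eq_upto k p r.
Proof. by move=> hpq hqr j hj; rewrite hpq ?hqr. Qed.

Lemma eq_upto_le k k' p q : (k' <= k)%N -> eq_upto k p q -> eq_upto k' p q.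
Proof. by move=> hk h j hj; apply: h; apply: leq_trans hk. Qed.

Lemma eq_uptoD k p p' q q' :
  eq_upto k p p' -> eq_upto k q q' -> eq_upto k (p + q) (p' + q').
Proof. by move=> hp hq j hj; rewrite !coefD hp ?hq. Qed.

Lemma eq_uptoN k p p' : eq_upto k p p' -> eq_upto k (- p) (- p').
Proof. by move=> hp j hj; rewrite !coefN hp. Qed.

Lemma eq_uptoB k p p' q q' :
  eq_upto k p p' -> eq_upto k q q' -> eq_upto k (p - q) (p' - q').
Proof. by move=> hp hq; apply: eq_uptoD => //; apply: eq_uptoN. Qed.

Lemma eq_uptoM k p p' q q' :
  eq_upto k p p' -> eq_upto k q q' -> eq_upto k (p * q) (p' * q').
Proof.
move=> hp hq j hj; rewrite !coefM; apply: eq_bigr => i _.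
by rewrite hp ?hq //; apply: leq_ltn_trans hj; [exact: leq_subr | rewrite -ltnS].
Qed.

Lemma eq_uptoMl k r p q : eq_upto k p q -> eq_upto k (r * p) (r * q).
Proof. exact: eq_uptoM. Qed.

Lemma eq_uptoMr k r p q : eq_upto k p q -> eq_upto k (p * r) (q * r).
Proof. by move=> h; apply: eq_uptoM. Qed.

Lemma eq_upto_deriv k p q : eq_upto k.+1 p q -> eq_upto k p^`() q^`().
Proof. by move=> h j hj; rewrite !coef_deriv h. Qed.

Lemma eq_upto_XMK k p q : eq_upto k.+1 ('X * p) ('X * q) -> eq_upto k p q.
Proof. by move=> h j hj; have := h j.+1 hj; rewrite !coefXM. Qed.

Lemma coef_exp_small p m j : p`_0 = 0 -> (j < m)%N -> (p ^+ m)`_j = 0.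
Proof.
move=> p0; elim: m j => [|m IHm] j //= hj.
rewrite exprS coefM big1 // => -[[|i] hi] _ /=; first by rewrite p0 mul0r.
by rewrite IHm ?mulr0 //; lia.
Qed.

End TruncatedEquality.

Lemma eq_upto_integ (R : numDomainType) k (p q : {poly R}) :
  p`_0 = q`_0 -> eq_upto k p^`() q^`() -> eq_upto k.+1 p q.
Proof.
move=> h0 h [|j] hj; first exact: h0.
have := h j hj; rewrite !coef_deriv => e.
have hj1 : j.+1%:R != 0 :> R by rewrite pnatr_eq0.
by apply: (mulIf hj1); rewrite !mulr_natr.
Qed.

Lemma natr_fact_neq0 {R : numDomainType} n : n`!%:R != 0 :> R.
Proof. by rewrite pnatr_eq0 -lt0n fact_gt0. Qed.

Lemma natr_binE {R : numFieldType} n k : (k <= n)%N ->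
  'C(n, k)%:R = n`!%:R / (k`!%:R * (n - k)`!%:R) :> R.
Proof.
move=> hk; rewrite -(bin_fact hk) !natrM mulfK //.
by rewrite mulf_neq0 ?natr_fact_neq0.
Qed.

Definition trunc (K : nat) (f : ps) : {poly rat} := \poly_(i < K.+1) f i.

Lemma coef_trunc K f j : (j <= K)%N -> (trunc K f)`_j = f j.
Proof. by move=> hj; rewrite coef_poly ltnS hj. Qed.

Lemma truncB K f g : trunc K (fun n => f n - g n) = trunc K f - trunc K g.
Proof. by apply/polyP => j; rewrite coefB !coef_poly; case: ifP; rewrite ?subr0. Qed.

Lemma trunc_mul K f g : eq_upto K.+1 (trunc K (mulps f g)) (trunc K f * trunc K g).
Proof.
move=> j hj; rewrite coef_trunc // coefM; apply: eq_bigr => i _.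
have hi : (i <= j)%N by rewrite -ltnS.
by rewrite !coef_trunc //; [apply: leq_trans (leq_subr _ _) _ | apply: leq_trans hi _].
Qed.

Lemma mulpsC f g n : mulps f g n = mulps g f n.
Proof.
rewrite -[LHS](coef_trunc (mulps f g) (leqnn n)) (trunc_mul f g (ltnSn n)) mulrC.
by rewrite -(trunc_mul g f (ltnSn n)) coef_trunc.
Qed.

Lemma trunc_one K : eq_upto K.+1 (trunc K oneps) 1.
Proof. by move=> j hj; rewrite coef_trunc // coef1. Qed.

Lemma trunc_t K : eq_upto K.+1 (trunc K tps) 'X.
Proof. by move=> j hj; rewrite coef_trunc // coefX. Qed.

Lemma trunc_pow K f m : eq_upto K.+1 (trunc K (powps f m)) (trunc K f ^+ m).
Proof.
elim: m => [|m IHm]; first exact: trunc_one.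
by rewrite exprS; apply: eq_upto_trans (trunc_mul _ _) (eq_uptoMl _ IHm).
Qed.

Lemma trunc_exp0 K : eq_upto K.+1 (trunc K (expps 0)) 1.
Proof.
by move=> [|j] hj; rewrite coef_trunc // coef1 /expps ?expr0 ?divr1 // expr0n mul0r.
Qed.

Lemma trunc_expD K a b :
  eq_upto K.+1 (trunc K (expps a) * trunc K (expps b)) (trunc K (expps (a + b))).
Proof.
move=> j hj; rewrite -(trunc_mul _ _ hj) !coef_trunc // /mulps /expps addrC exprDn.
rewrite mulr_suml; apply: eq_bigr => i _.
have hi : (i <= j)%N by rewrite -ltnS.
rewrite -[_ *+ 'C(j, i)]mulr_natl natr_binE //.
by field; rewrite !natr_fact_neq0.
Qed.

Lemma trunc_exp_deriv K c :
  eq_upto K (trunc K (expps c))^`() (c%:P * trunc K (expps c)).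
Proof.
move=> j hj; rewrite coef_deriv coefCM (coef_trunc _ hj) (coef_trunc _ (ltnW hj)).
rewrite /expps factS natrM exprS -mulr_natr.
by field; rewrite natr_fact_neq0 addrC natr1 pnatr_eq0.
Qed.

Section Polylog.
Variable R : numFieldType.
Implicit Type u : {poly R}.

(* Li_p(u) truncated after K terms; meaningful for [u] without constant term. *)
Definition polylog (p K : nat) u : {poly R} :=
  \sum_(m < K) ((m.+1 ^ p)%:R)^-1 *: u ^+ m.+1.

Lemma coef0_polylog p K u : u`_0 = 0 -> (polylog p K u)`_0 = 0.
Proof.
by move=> u0; rewrite coef_sum big1 // => m _; rewrite coefZ coef_exp_small ?mulr0.
Qed.

Lemma deriv_polylog1 K u :
  (polylog 1 K u)^`() = (\sum_(m < K) u ^+ m) * u^`().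
Proof.
rewrite /polylog raddf_sum mulr_suml; apply: eq_bigr => m _.
rewrite /= derivZ deriv_exp /= -scaler_nat scalerA expn1 mulVf ?pnatr_eq0 //.
by rewrite scale1r mulrC.
Qed.

Lemma deriv_polylogS p K u :
  u * (polylog p.+1 K u)^`() = polylog p K u * u^`().
Proof.
rewrite /polylog raddf_sum mulr_sumr mulr_suml; apply: eq_bigr => m _.
rewrite /= derivZ deriv_exp /= -scaler_nat scalerA -scalerAr -!scalerAl.
rewrite (mulrC u^`()) mulrA -exprS; congr (_ *: _).
by rewrite expnSr natrM invfM -mulrA mulVf ?mulr1 ?pnatr_eq0.
Qed.

End Polylog.

Lemma coef0_uexp : uexp 0 = 0.
Proof. by rewrite /uexp /oneps /expps expr0 divr1 subrr. Qed.

Lemma trunc_Li_uexp p K :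
  eq_upto K.+1 (trunc K (Li_uexp p)) (polylog p K (trunc K uexp)).
Proof.
move=> j hj; rewrite coef_trunc // /Li_uexp coef_sum big_add1 /=.
rewrite -(big_mkord xpredT (fun m => (((m.+1 ^ p)%:R)^-1 *: trunc K uexp ^+ m.+1)`_j)).
rewrite (@big_cat_nat _ _ _ j 0 K) //= [X in _ + X]big_nat_cond.
rewrite [X in _ + X]big1 ?addr0 => [|m /andP[/andP[hjm _] _]]; last first.
  by rewrite coefZ coef_exp_small ?mulr0 ?coef_trunc ?coef0_uexp.
apply: eq_bigr => m _; rewrite coefZ mulrC -(trunc_pow _ _ hj) coef_trunc //.
Qed.

Section TruncatedUexp.
Variable K : nat.
Local Notation U := (trunc K uexp).

Lemma trunc_uexp : eq_upto K.+1 U (1 - trunc K (expps (-1))).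
Proof. by rewrite /uexp truncB; apply: eq_uptoB => //; exact: trunc_one. Qed.

Lemma deriv_trunc_uexp : eq_upto K U^`() (1 - U).
Proof.
apply: eq_upto_trans (eq_upto_deriv trunc_uexp) _.
rewrite derivB derivC sub0r.
apply: eq_upto_trans (eq_uptoN (trunc_exp_deriv (-1))) _.
rewrite polyCN polyC1 mulN1r opprK.
apply: eq_upto_le (leqnSn K) _ => j hj.
by rewrite coefB (trunc_uexp hj) coefB opprB addrC subrK.
Qed.

Lemma polylog1_uexp : eq_upto K.+1 (polylog 1 K U) 'X.
Proof.
have U0 : U`_0 = 0 by rewrite coef_trunc ?coef0_uexp.
apply: eq_upto_integ; first by rewrite coef0_polylog ?coefX.
rewrite deriv_polylog1 derivX mulrC.
apply: eq_upto_trans (eq_uptoMr _ deriv_trunc_uexp) _.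
rewrite -opprB mulNr -subrX1 opprB => j hj.
by rewrite coefB coef_exp_small ?subr0.
Qed.

Lemma Li2_uexp_deriv :
  eq_upto K (U * (trunc K (Li_uexp 2))^`()) ('X * (1 - U)).
Proof.
apply: eq_upto_trans (eq_uptoMl U (eq_upto_deriv (trunc_Li_uexp 2 (K:=K)))) _.
rewrite deriv_polylogS; apply: eq_uptoM deriv_trunc_uexp.
exact: eq_upto_le (leqnSn K) polylog1_uexp.
Qed.

End TruncatedUexp.

Section DiBernoulli.
Variables (B : nat -> rat) (DB : rat -> nat -> rat).
Hypotheses (hB : is_bernoulli B) (hDB : is_poly_bernoulli 2 DB).

Lemma bernoulli_rec N : (0 < N)%N -> \sum_(i < N) 'C(N, i)%:R * B i = (N == 1)%:R.
Proof.
move=> hN; transitivity (N`!%:R * mulps (egf B) expm1ps N); last first.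
  by rewrite mulpsC hB /tps; case: eqP => [->|_]; rewrite ?mulr1 ?mulr0.
rewrite /mulps big_ord_recr /= subnn /expm1ps /expps /oneps expr0 divr1 subrr.
rewrite mulr0 addr0 mulr_sumr; apply: eq_bigr => i _.
have hi : (i <= N)%N := ltnW (ltn_ord i).
have -> : (N - i == 0)%N = false by rewrite subn_eq0 leqNgt ltn_ord.
rewrite natr_binE // /egf expr1n subr0.
by field; rewrite !natr_fact_neq0.
Qed.

Lemma sum_binS_bernoulli n : (0 < n)%N ->
  \sum_(i < n) 'C(n, i.+1)%:R * B i = \sum_(i < n) B i + (1 < n)%:R.
Proof.
elim: n => [|[|n] IHn] // _; first by rewrite !big_ord1 bin1 mul1r /= addr0.
under eq_bigr => i _ do rewrite binS natrD mulrDl.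
rewrite big_split /= [X in X + _ = _]big_ord_recr [X in _ + X = _]big_ord_recr /=.
rewrite bin_small // binn mul0r addr0 mul1r IHn // (bernoulli_rec (ltn0Sn n)).
have h1 : (1 < n.+1)%:R + (n.+1 == 1)%:R = 1 :> rat.
  by case: n {IHn} => [|n]; rewrite /= ?add0r ?addr0.
by rewrite [in RHS]big_ord_recr /= -[in RHS]h1; ring.
Qed.

Section GeneratingFunctions.
Variable n : nat.
Local Notation E := (trunc n.+1 (expps 1)).
Local Notation U := (trunc n.+1 uexp).
Local Notation b := (trunc n.+1 (egf B)).
Local Notation L := (trunc n.+1 (Li_uexp 2)).

Lemma exp_uexp : eq_upto n.+2 (E * U) (E - 1).
Proof.
apply: eq_upto_trans (eq_uptoMl E (trunc_uexp (K := n.+1))) _.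
rewrite mulrBr mulr1; apply: eq_uptoB => //.
by apply: eq_upto_trans (trunc_expD 1 (-1)) _; rewrite subrr; exact: trunc_exp0.
Qed.

Lemma expm1_bernoulli : eq_upto n.+2 ((E - 1) * b) 'X.
Proof.
have hEb := trunc_mul (K := n.+1) expm1ps (egf B); rewrite hB in hEb.
apply: eq_upto_trans _ (eq_upto_trans (eq_upto_sym hEb) (trunc_t (K := n.+1))).
apply: eq_uptoMr; rewrite /expm1ps truncB; apply: eq_uptoB => //.
exact/eq_upto_sym/trunc_one.
Qed.

Lemma X_exp_bernoulli_uexp : eq_upto n.+2 'X (E * b * U).
Proof.
apply: eq_upto_trans (eq_upto_sym expm1_bernoulli) _.
by rewrite mulrAC; apply: eq_uptoMr; exact: eq_upto_sym exp_uexp.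
Qed.

Lemma eq_upto_uexpK k p q : (k <= n.+1)%N ->
  eq_upto k.+1 (U * p) (U * q) -> eq_upto k p q.
Proof.
move=> hk hUpq; apply: eq_upto_XMK.
have hX := eq_upto_le (hk : (k.+1 <= n.+2)%N) X_exp_bernoulli_uexp.
apply: eq_upto_trans (eq_uptoMr p hX) _.
apply: eq_upto_trans _ (eq_uptoMr q (eq_upto_sym hX)).
by rewrite -!(mulrA (E * b)); apply: eq_uptoMl.
Qed.

Lemma exp_one_sub_uexp : eq_upto n.+2 (E * (1 - U)) 1.
Proof.
rewrite mulrBr mulr1 -[X in eq_upto _ _ X](subKr E).
by apply: eq_uptoB => //; exact: exp_uexp.
Qed.

Lemma uexp_bernoulli : eq_upto n.+2 (U * b) ('X * (1 - U)).
Proof.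
apply: eq_upto_sym; apply: eq_upto_trans (eq_uptoMr _ X_exp_bernoulli_uexp) _.
have -> : E * b * U * (1 - U) = E * (1 - U) * (U * b) by ring.
by rewrite -[X in eq_upto _ _ X]mul1r; apply: eq_uptoMr; exact: exp_one_sub_uexp.
Qed.

Lemma Li2_uexp_deriv_bernoulli : eq_upto n L^`() b.
Proof.
apply: (eq_upto_uexpK (leqnSn n)); apply: eq_upto_trans (Li2_uexp_deriv (K := n.+1)) _.
exact/eq_upto_sym/(eq_upto_le (leqnSn _))/uexp_bernoulli.
Qed.

Lemma uexp_poly_bernoulli x :
  eq_upto n.+2 (U * trunc n.+1 (egf (DB x))) (L * trunc n.+1 (expps x)).
Proof.
apply: eq_upto_trans (eq_upto_sym (trunc_mul _ _)) _.
by rewrite hDB; exact: trunc_mul.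
Qed.

Lemma di_bernoulli_egf :
  eq_upto n.+1 (trunc n.+1 (egf (DB 1)) - trunc n.+1 (egf (DB 0))) (L * E).
Proof.
have hD0 := eq_upto_trans (uexp_poly_bernoulli 0) (eq_uptoMl L (trunc_exp0 (K := n.+1))).
apply: (eq_upto_uexpK (leqnn _)); rewrite mulrBr.
apply: eq_upto_trans (eq_uptoB (uexp_poly_bernoulli 1) hD0) _.
rewrite -mulrBr mulrCA [U * E]mulrC; apply: eq_uptoMl; exact: eq_upto_sym exp_uexp.
Qed.

Lemma coef_Li2_uexp i : (i < n)%N -> L`_i.+1 = B i / i.+1`!%:R.
Proof.
move=> hi; have := Li2_uexp_deriv_bernoulli hi.
have hi1 : (i <= n)%N := ltnW hi.
rewrite coef_deriv !coef_trunc ?(leqW hi1) // /egf => hL.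
rewrite -[B i](divfK (natr_fact_neq0 i)) -hL factS natrM -mulr_natr.
by field; rewrite natr_fact_neq0 addrC natr1 pnatr_eq0.
Qed.

Lemma di_bernoulli_diff : DB 1 n - DB 0 n = \sum_(i < n) 'C(n, i.+1)%:R * B i.
Proof.
have := di_bernoulli_egf (ltnSn n).
rewrite coefB !coef_trunc // coefM big_ord_recl coef_trunc // /Li_uexp big_geq //.
rewrite mul0r add0r /egf -mulrBl => hD.
rewrite -[LHS](divfK (natr_fact_neq0 n)) hD mulr_suml; apply: eq_bigr => i _.
rewrite /= coef_Li2_uexp // coef_trunc; last exact: leq_trans (leq_subr _ _) (leqnSn n).
rewrite /expps expr1n natr_binE // factS natrM.
by field; rewrite !natr_fact_neq0 addrC natr1 pnatr_eq0.
Qed.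

End GeneratingFunctions.

End DiBernoulli.

Theorem corollary3 (B : nat -> rat) (DB : rat -> nat -> rat)
  (hB : is_bernoulli B) (hDB : is_poly_bernoulli 2 DB) (n : nat) (hn : (2 <= n)%N) :
  \sum_(0 <= j < n.+1) B j = DB 1 n + B n - DB 0 n - 1.
Proof.
have hD := di_bernoulli_diff hB hDB n.
rewrite sum_binS_bernoulli ?(ltnW hn) // hn /= in hD.
rewrite big_mkord big_ord_recr /= -[DB 1 n](subrK (DB 0 n)) hD.
ring.
Qed.
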